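(* Let $\boldsymbol{u}^\star\in\mathbb{R}^n\setminus\{\boldsymbol{0}\}$ and $f(\boldsymbol{u})=\frac12\|\boldsymbol{u}\boldsymbol{u}^{\mathrm T}-\boldsymbol{u}^\star{\boldsymbol{u}^\star}^{\mathrm T}\|_1$ on $\mathbb{R}^n$. Let $\boldsymbol{u}$ be any spurious stationary point of $f$ and let $\boldsymbol{w}=\boldsymbol{u}^\star-\boldsymbol{u}$ or $\boldsymbol{w}=-\boldsymbol{u}^\star-\boldsymbol{u}$. Then: (i) $d^2f(\boldsymbol{u})(\boldsymbol{w})=-\|\boldsymbol{u}^\star\|_1^2<0$; (ii) $\inf_{\boldsymbol{z}\in\mathbb{R}^n}d^2f(\boldsymbol{u})(\boldsymbol{w}\,|\,\boldsymbol{z})=-\|\boldsymbol{u}^\star\|_1^2<0$, i.e. for every $\varepsilon>0$ there is $\boldsymbol{z}\in\mathbb{R}^n$ with $d^2f(\boldsymbol{u})(\boldsymbol{w}\,|\,\boldsymbol{z})<-\|\boldsymbol{u}^\star\|_1^2+\varepsilon$; (iii) $f''(\boldsymbol{u};\boldsymbol{w})=-\|\boldsymbol{u}^\star\|_1^2<0$.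
   Context: $\|\cdot\|_1$ is the entrywise $\ell_1$-norm. $df(\boldsymbol{x})(\boldsymbol{w})=\lim_{t\searrow0}(f(\boldsymbol{x}+t\boldsymbol{w})-f(\boldsymbol{x}))/t$ (directional derivative). Second subderivative (no $\boldsymbol{v}$): $d^2f(\boldsymbol{x})(\boldsymbol{w})=\liminf_{t\searrow0,\boldsymbol{w}'\to\boldsymbol{w}}\frac{f(\boldsymbol{x}+t\boldsymbol{w}')-f(\boldsymbol{x})-t\,df(\boldsymbol{x})(\boldsymbol{w}')}{t^2/2}$. Parabolic subderivative: $d^2f(\boldsymbol{x})(\boldsymbol{w}\,|\,\boldsymbol{z})=\liminf_{t\searrow0,\boldsymbol{z}'\to\boldsymbol{z}}\frac{f(\boldsymbol{x}+t\boldsymbol{w}+\frac12t^2\boldsymbol{z}')-f(\boldsymbol{x})-t\,df(\boldsymbol{x})(\boldsymbol{w})}{t^2/2}$. One-sided second directional derivative: $f''(\boldsymbol{x};\boldsymbol{w})=\lim_{t\searrow0}\frac{f(\boldsymbol{x}+t\boldsymbol{w})-f(\boldsymbol{x})-t\,df(\boldsymbol{x})(\boldsymbol{w})}{t^2/2}$. A point $\boldsymbol{u}$ is stationary if $\boldsymbol{0}\in\partial f(\boldsymbol{u})$, where $\partial f(\boldsymbol{u})=\{\boldsymbol{Z}\boldsymbol{u}:\boldsymbol{Z}\text{ symmetric}, \boldsymbol{Z}\in\operatorname{Sign}(\boldsymbol{u}\boldsymbol{u}^{\mathrm T}-\boldsymbol{u}^\star{\boldsymbol{u}^\star}^{\mathrm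 T})\}$ (entrywise set-valued sign, $\operatorname{Sign}(0)=[-1,1]$); it is spurious if additionally $\boldsymbol{u}\notin\{\pm\boldsymbol{u}^\star\}$. *)

From HB Require Import structures.
From mathcomp Require Import all_boot all_order all_algebra.
From mathcomp Require Import all_classical all_reals all_analysis.
Set Implicit Arguments. Unset Strict Implicit. Unset Printing Implicit Defensive.
Import Order.TTheory GRing.Theory Num.Theory.
Import numFieldNormedType.Exports.
Local Open Scope classical_set_scope.
Local Open Scope ring_scope.

Section Defs.
Variable R : realType.

Definition l1 m k (A : 'M[R]_(m, k)) : R := \sum_i \sum_j `|A i j|.

Definition fobj n (us u : 'cV[R]_n) : R := 2^-1 * l1 (u *m u^T - us *m us^T).

Definition dirder n (f : 'cV[R]_n -> R) (x w : 'cV[R]_n) : R :=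
  lim ((fun t : R => (f (x + t *: w) - f x) / t) @ 0^'+).

Definition d2sub n (f : 'cV[R]_n -> R) (x w : 'cV[R]_n) : \bar R :=
  limf_einf (fun p : R * 'cV[R]_n =>
     ((f (x + p.1 *: p.2) - f x - p.1 * dirder f x p.2) / (p.1 ^+ 2 / 2))%:E)
    (filter_prod (0^'+) (nbhs w)).

Definition d2par n (f : 'cV[R]_n -> R) (x w z : 'cV[R]_n) : \bar R :=
  limf_einf (fun p : R * 'cV[R]_n =>
     ((f (x + p.1 *: w + (2^-1 * p.1 ^+ 2) *: p.2) - f x - p.1 * dirder f x w)
        / (p.1 ^+ 2 / 2))%:E)
    (filter_prod (0^'+) (nbhs z)).

(* difference quotient whose limit as t \searrow 0 is f''(x;w) *)
Definition sd2quot n (f : 'cV[R]_n -> R) (x w : 'cV[R]_n) (t : R) : R :=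
  (f (x + t *: w) - f x - t * dirder f x w) / (t ^+ 2 / 2).

Definition in_Sign m k (Z M : 'M[R]_(m, k)) : Prop :=
  forall i j, (0 < M i j -> Z i j = 1) /\ (M i j < 0 -> Z i j = -1) /\
              (M i j = 0 -> -1 <= Z i j <= 1).

Definition subdiff n (us u : 'cV[R]_n) : set 'cV[R]_n :=
  [set Z *m u | Z in [set Z : 'M[R]_n | Z^T = Z /\ in_Sign Z (u *m u^T - us *m us^T)]].

Definition stationary n (us u : 'cV[R]_n) : Prop := subdiff us u 0.

Definition spurious_stationary n (us u : 'cV[R]_n) : Prop :=
  stationary us u /\ u <> us /\ u <> - us.

End Defs.

(* A stationary point u of f(u) = ||u u^T - a a^T||_1 / 2 comes with a symmetric
   sign matrix Z of u u^T - a a^T such that Z u = 0.  Testing Z u = 0 against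
   suitable vectors shows that u = a (resp. u = -a) as soon as
   sigma = sum_i sg(a_i) u_i is positive (resp. negative), and otherwise that
   |u_i| <= |a_i| for all i.  For a spurious point every point of the segment from
   u to a is then dominated entrywise by a, on which f is explicit:
   f(v) = (||a||_1^2 - (sum_i sg(a_i) v_i)^2) / 2, so that
   f(u + t (a - u)) = (1 - t^2) ||a||_1^2 / 2.  Along w = a - u the first-order term
   vanishes and every second-order quotient equals -||a||_1^2 = -||w||_1^2.  The
   matching lower bounds come from |m + t b + t^2 c| >= |m| + t |.|'(m; b) - t^2 |c|,
   summed over the entries, together with df(u) >= 0 for the parabolic
   subderivative. *)

From HB Require Import structures.
From mathcomp Require Import all_boot all_order all_algebra.
From mathcomp Require Import all_classical all_reals all_analysis.
From mathcomp Require Import ring lra.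
Import Order.TTheory GRing.Theory Num.Theory.
Import numFieldNormedType.Exports.
Local Open Scope classical_set_scope.
Local Open Scope ring_scope.
Set Implicit Arguments. Unset Strict Implicit. Unset Printing Implicit Defensive.

Section SignSet.
Variable R : realFieldType.
Implicit Types z m b s : R.

Definition in_sign z m :=
  (0 < m -> z = 1) /\ (m < 0 -> z = -1) /\ (m = 0 -> -1 <= z <= 1).

Lemma in_sign_mul z m : in_sign z m -> z * m = `|m|.
Proof.
case=> pos [neg zero]; case: (ltrgtP m 0) => hm.
- by rewrite neg // ltr0_norm // mulN1r.
- by rewrite pos // gtr0_norm // mul1r.
- by rewrite hm mulr0 normr0.
Qed.

Lemma in_sign_norm_le1 z m : in_sign z m -> `|z| <= 1.
Proof.
case=> pos [neg zero]; case: (ltrgtP m 0) => hm.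
- by rewrite neg // normrN normr1.
- by rewrite pos // normr1.
- by rewrite ler_norml zero.
Qed.

Lemma in_sign_sgM s z m : s != 0 -> in_sign z m ->
  in_sign (Num.sg s * z) (Num.sg s * m).
Proof.
move=> s0 [pos [neg zero]]; case: (ltrgtP s 0) => hs; last by rewrite hs eqxx in s0.
- rewrite ltr0_sg // !mulN1r; split; [|split].
  + by rewrite oppr_gt0 => /neg ->; rewrite opprK.
  + by rewrite oppr_lt0 => /pos ->.
  + move/eqP; rewrite oppr_eq0 => /eqP /zero; lra.
- by rewrite gtr0_sg // !mul1r.
Qed.

Lemma sgr_mul_le_norm s b : Num.sg s * b <= `|b|.
Proof.
apply: le_trans (ler_norm _) _; rewrite normrM ler_piMl // normr_sg.
by case: (s != 0).
Qed.

(* The right derivative of the absolute value at [m] in the direction [b]. *)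
Definition dnorm m b := if m == 0 then `|b| else Num.sg m * b.

Lemma in_sign_mul_le_dnorm z m b : in_sign z m -> z * b <= dnorm m b.
Proof.
move=> hz; rewrite /dnorm; case: eqP => [m0|/eqP m0].
  apply: le_trans (ler_norm _) _; rewrite normrM.
  by rewrite ler_piMl // (in_sign_norm_le1 hz).
case: hz => pos [neg _]; case: (ltrgtP m 0) => hm.
- by rewrite neg // ltr0_sg.
- by rewrite pos // gtr0_sg.
- by rewrite hm eqxx in m0.
Qed.

Lemma norm_add_dominated m d : `|d| < `|m| -> `|m + d| = `|m| + Num.sg m * d.
Proof.
move=> hd; have := ler_norm d; have := ler_norm (- d); rewrite normrN.
case: (ltrgtP m 0) => hm dle Nle.
- rewrite (ltr0_norm hm) in hd *; rewrite ltr0_sg // mulN1r ltr0_norm; lra.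
- rewrite (gtr0_norm hm) in hd *; rewrite gtr0_sg // mul1r gtr0_norm; lra.
- by move: hd; rewrite hm normr0 ltNge normr_ge0.
Qed.

Lemma norm_sub_dominated (x y : R) : `|x| <= `|y| -> `|y - x| = `|y| - Num.sg y * x.
Proof.
move=> hxy; have := ler_norm x; have := ler_norm (- x); rewrite normrN.
case: (ltrgtP y 0) => hy xle Nle.
- rewrite (ltr0_norm hy) in hxy *; rewrite ltr0_sg // mulN1r ler0_norm; lra.
- rewrite (gtr0_norm hy) in hxy *; rewrite gtr0_sg // mul1r ger0_norm; lra.
- move: hxy; rewrite hy normr0 normr_le0 => /eqP ->.
  by rewrite subrr normr0 mulr0 subr0.
Qed.

Lemma eq_of_sqr_eq_mul_gt0 (x y : R) : x * x = y * y -> 0 < x * y -> x = y.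
Proof.
move=> sqrE xy_gt0; apply/eqP; rewrite -subr_eq0.
have : (x - y) * (x + y) == 0 by rewrite mulrDr !mulrBl sqrE; apply/eqP; ring.
rewrite mulf_eq0 => /orP[// | /eqP xy0].
have x_def : x = - y by rewrite -[x]subr0 -xy0; ring.
by move: xy_gt0; rewrite x_def mulNr oppr_gt0 ltNge -expr2 sqr_ge0.
Qed.

End SignSet.

Lemma psumr2_eq0P (R : numDomainType) (I J : finType) (F : I -> J -> R) :
  (forall i j, 0 <= F i j) -> \sum_i \sum_j F i j = 0 -> forall i j, F i j = 0.
Proof.
move=> F_ge0 sum0 i j.
have row0 : \sum_j F i j = 0.
  by apply: (psumr_eq0P _ sum0) => // i' _; exact: sumr_ge0.
by apply: (psumr_eq0P _ row0).
Qed.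

Section StationaryCertificate.
Variables (R : realFieldType) (n : nat).
Implicit Types (x y v : 'I_n -> R) (Z : 'I_n -> 'I_n -> R).

Definition stationary_certificate x y Z :=
  [/\ forall i j, Z i j = Z j i,
      forall i j, in_sign (Z i j) (x i * x j - y i * y j) &
      forall i, \sum_j Z i j * x j = 0].

Lemma sum_sg_resid x y :
  \sum_i \sum_j Num.sg (y i) * Num.sg (y j) * (x i * x j - y i * y j)
  = (\sum_i Num.sg (y i) * x i) ^+ 2 - (\sum_i `|y i|) ^+ 2.
Proof.
rewrite !expr2 !big_distrlr -sumrB; apply: eq_bigr => i _.
by rewrite -sumrB; apply: eq_bigr => j _ /=; rewrite !normrEsg; ring.
Qed.

Lemma certificate_opp x y Z : stationary_certificate x y Z ->
  stationary_certificate (fun i => - x i) y Z.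
Proof.
case=> Zsym Zsg Zx; split=> // [i j|i]; first by rewrite mulrNN.
by rewrite (eq_bigr _ (fun j _ => mulrN _ _)) sumrN Zx oppr0.
Qed.

Variables (x y : 'I_n -> R) (Z : 'I_n -> 'I_n -> R).
Hypothesis cert : stationary_certificate x y Z.

Lemma certificate_bilinear v : \sum_i \sum_j Z i j * (v i * x j + x i * v j) = 0.
Proof.
have [Zsym _ Zx] := cert.
transitivity (\sum_i \sum_j (v i * (Z i j * x j) + v j * (Z j i * x i))).
  by apply: eq_bigr => i _; apply: eq_bigr => j _; rewrite (Zsym j i); ring.
rewrite (eq_bigr _ (fun i _ => big_split _ _ _ _ _)) big_split /=.
rewrite [X in _ + X]exchange_big /=.
by rewrite !big1 ?addr0 // => i _; rewrite -mulr_sumr Zx mulr0.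
Qed.

Lemma certificate_support i : y i = 0 -> x i = 0.
Proof.
move=> yi0; have [_ Zsg Zx] := cert.
have : \sum_j `|x i * x j| = 0.
  transitivity (x i * \sum_j Z i j * x j); last by rewrite Zx mulr0.
  rewrite mulr_sumr; apply: eq_bigr => j _.
  by have := in_sign_mul (Zsg i j); rewrite yi0 mul0r subr0 => <-; ring.
move/(psumr_eq0P (fun j _ => normr_ge0 _))/(_ i isT)/normr0_eq0/eqP.
by rewrite mulf_eq0 orbb => /eqP.
Qed.

Lemma sgr_sqr_certificate j : Num.sg (y j) ^+ 2 * x j = x j.
Proof.
rewrite sqr_sg; have [/certificate_support ->|_] := eqVneq (y j) 0.
  by rewrite mulr0.
by rewrite mul1r.
Qed.

Lemma certificate_term_le0 i j : y i != 0 -> Num.sg (y i) * x i <= 0 ->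
  (Num.sg (y i) * Num.sg (y j) * Z i j + 1) * (Num.sg (y j) * x j) <= 0.
Proof.
move=> yi0 xi_le0; have [_ Zsg _] := cert.
rewrite -sgrM; set p := y i * y j.
have coef_ge0 : 0 <= Num.sg p * Z i j + 1.
  have : `|Num.sg p * Z i j| <= 1.
    rewrite normrM normr_sg; case: (p != 0); rewrite ?mul0r ?ler01 //.
    by rewrite mul1r (in_sign_norm_le1 (Zsg i j)).
  by rewrite ler_norml => /andP[]; lra.
case: (lerP (Num.sg (y j) * x j) 0) => xj; first exact: mulr_ge0_le0.
have yj0 : y j != 0 by apply: contraTneq xj => ->; rewrite sgr0 mul0r ltxx.
have p0 : p != 0 by rewrite mulf_neq0.
suff -> : Num.sg p * Z i j = -1 by rewrite addNr mul0r.
have [_ [neg _]] := in_sign_sgM p0 (Zsg i j); apply: neg.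
have -> : Num.sg p * (x i * x j - y i * y j) =
    (Num.sg (y i) * x i) * (Num.sg (y j) * x j) - `|y i| * `|y j|.
  by rewrite /p sgrM !normrEsg; ring.
have : 0 < `|y i| * `|y j| by rewrite mulr_gt0 ?normr_gt0.
have := mulr_le0_ge0 xi_le0 (ltW xj); lra.
Qed.

Lemma certificate_sg_mul_gt0 i : 0 < \sum_j Num.sg (y j) * x j ->
  y i != 0 -> 0 < Num.sg (y i) * x i.
Proof.
move=> sigma_gt0 yi0; rewrite ltNge; apply/negP => xi_le0.
have [_ _ Zx] := cert.
suff : \sum_j (Num.sg (y i) * Num.sg (y j) * Z i j + 1) * (Num.sg (y j) * x j)
    = \sum_j Num.sg (y j) * x j.
  move=> sumE; move: sigma_gt0; rewrite -sumE ltNge => /negP; apply.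
  by apply: sumr_le0 => j _; exact: certificate_term_le0.
transitivity (Num.sg (y i) * \sum_j Z i j * x j + \sum_j Num.sg (y j) * x j).
  rewrite mulr_sumr -big_split; apply: eq_bigr => j _ /=.
  transitivity (Num.sg (y i) * (Z i j * (Num.sg (y j) ^+ 2 * x j)) + Num.sg (y j) * x j).
    by ring.
  by rewrite sgr_sqr_certificate.
by rewrite Zx mulr0 add0r.
Qed.


Lemma certificate_eq_of_same_sign : (forall i, y i != 0 -> 0 < x i * y i) ->
  forall i, x i = y i.
Proof.
move=> xy_gt0; pose q i := x i / y i.
have q_gt0 i : y i != 0 -> 0 < q i.
  move=> yi0; have -> : q i = x i * y i / y i ^+ 2 by rewrite /q; field.
  by rewrite divr_gt0 ?xy_gt0 // lt_def sqrf_eq0 yi0 sqr_ge0.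
have q_ge0 i : 0 <= q i.
  by have [yi0|/q_gt0/ltW //] := eqVneq (y i) 0; rewrite /q yi0 invr0 mulr0.
(* The weights [q i - (q i)^-1] turn each term of the bilinear identity into a
   nonnegative multiple of the residual, so all residuals vanish. *)
pose v i := (q i - (q i)^-1) * x i.
have termE i j : Z i j * (v i * x j + x i * v j) =
    (q i + q j) * `|x i * x j - y i * y j|.
  have [_ Zsg _] := cert.
  have [yi0|yi0] := eqVneq (y i) 0.
    by rewrite /v (certificate_support yi0) yi0 !(mul0r, mulr0, addr0, subrr, normr0).
  have [yj0|yj0] := eqVneq (y j) 0.
    by rewrite /v (certificate_support yj0) yj0 !(mul0r, mulr0, addr0, subrr, normr0).
  have xi0 : x i != 0 by apply: contraTneq (xy_gt0 i yi0) => ->; rewrite mul0r ltxx.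
  have xj0 : x j != 0 by apply: contraTneq (xy_gt0 j yj0) => ->; rewrite mul0r ltxx.
  have -> : v i * x j + x i * v j = (q i + q j) * (x i * x j - y i * y j).
    by rewrite /v /q; field; rewrite xi0 xj0 yi0 yj0.
  by rewrite mulrCA (in_sign_mul (Zsg i j)).
have := certificate_bilinear v; under eq_bigr do under eq_bigr do rewrite termE.
move/psumr2_eq0P => /(_ (fun i j => mulr_ge0 (addr_ge0 (q_ge0 i) (q_ge0 j)) (normr_ge0 _))).
move=> resid0 i; have [yi0|yi0] := eqVneq (y i) 0.
  by rewrite yi0 (certificate_support yi0).
apply: eq_of_sqr_eq_mul_gt0 (xy_gt0 i yi0).
move: (resid0 i i) => /eqP; rewrite mulf_eq0 normr_eq0 subr_eq0 => /orP[|/eqP //].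
by rewrite -mulr2n mulrn_eq0 /= (negbTE (lt0r_neq0 (q_gt0 i yi0))).
Qed.

Lemma certificate_eq_of_gt0 : 0 < \sum_i Num.sg (y i) * x i -> forall i, x i = y i.
Proof.
move=> sigma_gt0; apply: certificate_eq_of_same_sign => i yi0.
have -> : x i * y i = (Num.sg (y i) * x i) * `|y i| by rewrite {1}(numEsg (y i)); ring.
by rewrite mulr_gt0 ?normr_gt0 ?certificate_sg_mul_gt0.
Qed.

Lemma certificate_l1_resid_le :
  \sum_i \sum_j `|x i * x j - y i * y j| <= (\sum_i `|y i|) ^+ 2.
Proof.
have [_ Zsg Zx] := cert.
rewrite expr2 big_distrlr /=.
have -> : \sum_i \sum_j `|x i * x j - y i * y j| =
    \sum_i \sum_j - (Z i j * (y i * y j)).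
  apply: eq_bigr => i _.
  transitivity (x i * \sum_j Z i j * x j + \sum_j - (Z i j * (y i * y j))).
    rewrite mulr_sumr -big_split; apply: eq_bigr => j _ /=.
    by rewrite -(in_sign_mul (Zsg i j)); ring.
  by rewrite Zx mulr0 add0r.
apply: ler_sum => i _; apply: ler_sum => j _.
apply: le_trans (ler_norm _) _; rewrite normrN normrM -[X in _ <= X]normrM.
by rewrite ler_piMl // (in_sign_norm_le1 (Zsg i j)).
Qed.

End StationaryCertificate.

Lemma certificate_spurious (R : realFieldType) n (x y : 'I_n -> R) Z :
  stationary_certificate x y Z ->
  ~ (forall i, x i = y i) -> ~ (forall i, x i = - y i) ->
  \sum_i Num.sg (y i) * x i = 0 /\ forall i, `|x i| <= `|y i|.
Proof.
move=> cert nxy nxNy.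
have sigma0 : \sum_i Num.sg (y i) * x i = 0.
  case: (ltrgtP (\sum_i Num.sg (y i) * x i) 0) => // [sigma_lt0|sigma_gt0].
    have sigmaN_gt0 : 0 < \sum_i Num.sg (y i) * - x i.
      by rewrite (eq_bigr _ (fun i _ => mulrN _ _)) sumrN oppr_gt0.
    have := certificate_eq_of_gt0 (certificate_opp cert) sigmaN_gt0.
    by move=> xNy; exfalso; apply: nxNy => i; rewrite -xNy opprK.
  by exfalso; apply: nxy; exact: certificate_eq_of_gt0 cert sigma_gt0.
split=> // i.
have [yi0|yi0] := eqVneq (y i) 0; first by rewrite (certificate_support cert yi0) yi0.
pose T i j := `|x i * x j - y i * y j| +
  Num.sg (y i) * Num.sg (y j) * (x i * x j - y i * y j).
have T_ge0 i' j : 0 <= T i' j.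
  have := sgr_mul_le_norm (y i' * y j) (- (x i' * x j - y i' * y j)).
  by rewrite /T sgrM mulrN normrN; lra.
have : \sum_i \sum_j T i j = 0.
  apply/eqP; rewrite eq_le sumr_ge0 ?andbT => [|i' _]; last exact: sumr_ge0.
  rewrite (eq_bigr _ (fun i _ => big_split _ _ _ _ _)) big_split /= sum_sg_resid.
  by rewrite sigma0 expr0n /= sub0r subr_le0 (certificate_l1_resid_le cert).
move/psumr2_eq0P => /(_ T_ge0 i i) /eqP.
rewrite /T; have -> : Num.sg (y i) * Num.sg (y i) = 1 by rewrite -expr2 sqr_sg yi0.
rewrite mul1r addr_eq0 => /eqP resid.
have : x i * x i <= y i * y i by have := normr_ge0 (x i * x i - y i * y i); rewrite resid; lra.
by rewrite -!expr2 -(real_normK (num_real (x i))) -(real_normK (num_real (y i)))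
  (ler_pXn2r (_ : 0 < 2)%N) ?nnegrE.
Qed.

Section RightLimits.
Variable R : realFieldType.

Lemma dnorm_expansion_ge (m b c t : R) : 0 < t ->
  - (t ^+ 2 * `|c|) <= `|m + t * b + t ^+ 2 * c| - `|m| - t * dnorm m b.
Proof.
move=> t_gt0; rewrite /dnorm; case: eqP => [->|_].
  have := lerB_normD (t * b) (t ^+ 2 * c).
  rewrite add0r normr0 subr0 !normrM (gtr0_norm t_gt0); lra.
have := sgr_mul_le_norm m (m + t * b + t ^+ 2 * c).
have := ler_wpM2l (sqr_ge0 t) (sgr_mul_le_norm m (- c)).
rewrite normrN [`|m|]normrEsg; lra.
Qed.

Lemma dnorm_expansion_near (m b c : R) : \forall t \near 0^'+,
  `| `|m + t * b + t ^+ 2 * c| - `|m| - t * dnorm m b| <= t ^+ 2 * `|c|.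
Proof.
have [->|m0] := eqVneq m 0.
  near=> t; have t_gt0 : 0 < t by near: t; exact: nbhs_right_gt.
  rewrite /dnorm eqxx add0r normr0 subr0.
  have -> : t * `|b| = `|t * b| by rewrite normrM gtr0_norm.
  have -> : t ^+ 2 * `|c| = `|t ^+ 2 * c| by rewrite normrM ger0_norm ?sqr_ge0.
  by apply: le_trans (ler_dist_dist _ _) _; rewrite addrAC subrr add0r.
have small : t * b + t ^+ 2 * c @[t --> 0^'+] --> 0.
  apply: cvg_at_right_filter.
  rewrite -[X in _ --> X](_ : 0 * b + (0 * 0) * c = 0); last by rewrite !mul0r addr0.
  apply: cvgD; apply: cvgM; rewrite ?expr2; try apply: cvgM;
    by [exact: cvg_id | exact: cvg_cst].
have := cvgr0_norm_lt _ small `|m|; rewrite normr_gt0 => /(_ _ m0).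
apply: filterS => t /norm_add_dominated; rewrite addrA => ->.
rewrite /dnorm (negbTE m0) (_ : _ - _ = Num.sg m * (t ^+ 2 * c)); last by ring.
by rewrite normrM normr_sg m0 mul1r normrM ger0_norm // sqr_ge0.
Unshelve. all: by end_near.
Qed.

Lemma cvg_at_right0_linear_bound (g : R -> R) (l K : R) :
  (\forall t \near 0^'+, `|g t - l| <= t * K) -> g t @[t --> 0^'+] --> l.
Proof.
move=> bound; apply/cvgrPdist_le => e e_gt0.
have tK : t * K @[t --> 0^'+] --> 0.
  apply: cvg_at_right_filter; rewrite -[X in _ --> X](mul0r K).
  by apply: cvgM; [exact: cvg_id | exact: cvg_cst].
near=> t; rewrite distrC; apply: (@le_trans _ _ (t * K)).
  by near: t; exact: bound.
by near: t; exact: (cvgr_le _ tK e e_gt0).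
Unshelve. all: by end_near.
Qed.

End RightLimits.

Section LimInf.
Variable R : realType.
Local Open Scope ereal_scope.

Lemma limf_einf_ge_cvg (T : choiceType) (X : filteredType T) (F : set_system X)
    (FF : Filter F) (g G : X -> R) (c : R) :
  (\forall p \near F, (G p <= g p)%R) -> G p @[p --> F] --> c ->
  c%:E <= limf_einf (fun p => (g p)%:E) F.
Proof.
move=> Gg Gc; rewrite limf_einfE; apply/lee_addgt0Pr => e e_gt0.
pose V := [set p | (c - e <= g p)%R].
have FV : F V.
  near=> p; apply: (@le_trans _ _ (G p)); last by near: p.
  by near: p; apply: (cvgr_ge _ Gc); rewrite ltrBlDr ltrDl.
suff : (c - e)%:E <= ereal_sup [set ereal_inf ((fun p => (g p)%:E) @` V) | V in F].
  by move/(leeD2r e%:E); rewrite -EFinD subrK.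
apply: le_ereal_sup_tmp; exists (ereal_inf ((fun p => (g p)%:E) @` V)); first by exists V.
by apply: le_ereal_inf_tmp => _ [p Vp <-]; rewrite lee_fin.
Unshelve. all: by end_near.
Qed.

Lemma limf_einf_prod_le (U : topologicalType) (g : R * U -> R) (z : U) (c : R) :
  (\forall t \near 0^'+, (g (t, z) <= c)%R) ->
  limf_einf (fun p => (g p)%:E) (filter_prod 0^'+ (nbhs z)) <= c%:E.
Proof.
move=> gc; rewrite limf_einfE; apply: ge_ereal_sup => _ [V [[A B] /= [FA FB] AB] <-].
have [t [At gtc]] := filter_ex (filterI FA gc).
apply: le_trans (_ : (g (t, z))%:E <= _); last by rewrite lee_fin.
by apply: ereal_inf_lbound; exists (t, z) => //; apply: AB; split => //; exact: nbhs_singleton.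
Qed.

End LimInf.

Section EntrywiseL1.
Variable R : realType.

Lemma l1_ge0 m k (A : 'M[R]_(m, k)) : 0 <= l1 A.
Proof. by apply: sumr_ge0 => i _; apply: sumr_ge0. Qed.

Lemma l1_eq0 m k (A : 'M[R]_(m, k)) : l1 A = 0 -> A = 0.
Proof.
move/psumr2_eq0P => A0; apply/matrixP => i j; rewrite mxE.
by apply/normr0_eq0; apply: A0 => ? ?.
Qed.

Lemma l1N m k (A : 'M[R]_(m, k)) : l1 (- A) = l1 A.
Proof. by apply: eq_bigr => i _; apply: eq_bigr => j _; rewrite mxE normrN. Qed.

Lemma l1_col n (v : 'cV[R]_n) : l1 v = \sum_i `|v i 0|.
Proof. by apply: eq_bigr => i _; rewrite big_ord1. Qed.

Lemma l1_col_sqr n (v : 'cV[R]_n) : l1 v ^+ 2 = \sum_i \sum_j `|v i 0 * v j 0|.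
Proof.
rewrite l1_col expr2 big_distrlr; apply: eq_bigr => i _.
by apply: eq_bigr => j _; rewrite normrM.
Qed.

Lemma ler_dist_l1 m k (A B : 'M[R]_(m, k)) : `|l1 A - l1 B| <= l1 (A - B).
Proof.
rewrite -sumrB; apply: le_trans (ler_norm_sum _ _ _) _; apply: ler_sum => i _.
rewrite -sumrB; apply: le_trans (ler_norm_sum _ _ _) _; apply: ler_sum => j _.
by rewrite !mxE; exact: ler_dist_dist.
Qed.

Lemma l1_le_mx_norm m k (A : 'M[R]_(m, k)) : l1 A <= (m * k)%:R * `|A|.
Proof.
have entry_le i j : `|A i j| <= `|A| by rewrite [`|A|]mx_normrE (le_bigmax _ _ (i, j)).
apply: (@le_trans _ _ (\sum_(i < m) \sum_(j < k) `|A|)); first by do 2!apply: ler_sum => ? _.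
by rewrite sumr_const sumr_const !card_ord -mulrnA mulr_natl mulnC.
Qed.

Lemma continuous_l1 m k : continuous (@l1 R m k).
Proof.
move=> A; apply/(@cvgrPdist_le _ _ _ (nbhs A) (nbhs_filter A)) => e e_gt0.
have mk_gt0 : 0 < (m * k)%:R + 1 :> R by rewrite ltr_wpDl.
near=> B; apply: le_trans (ler_dist_l1 _ _) _.
apply: le_trans (l1_le_mx_norm _) _.
have : `|A - B| <= e / ((m * k)%:R + 1).
  by near: B; apply: cvgr_dist_le; [exact: cvg_id | rewrite divr_gt0].
rewrite ler_pdivlMr // => AB; apply: le_trans AB.
by rewrite mulrC ler_wpM2l // lerDl.
Unshelve. all: by end_near.
Qed.

Lemma cvg_l1_sqr m k (T : Type) (F : set_system T) (FF : Filter F)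
    (h : T -> 'M[R]_(m, k)) (A : 'M[R]_(m, k)) :
  h x @[x --> F] --> A -> - l1 (h x) ^+ 2 @[x --> F] --> - l1 A ^+ 2.
Proof.
move=> hA; apply: cvgN; rewrite expr2.
by apply: cvgM; exact (continuous_cvg _ (@continuous_l1 m k A) hA).
Qed.

End EntrywiseL1.

Section Objective.
Variables (R : realType) (n : nat).
Implicit Types (a u v h : 'cV[R]_n) (t : R).

Definition resid a v i j := v i 0 * v j 0 - a i 0 * a j 0.

Definition cross u h i j := u i 0 * h j 0 + h i 0 * u j 0.

Definition dfobj a u h := 2^-1 * \sum_i \sum_j dnorm (resid a u i j) (cross u h i j).

Lemma fobjE a v : fobj a v = 2^-1 * \sum_i \sum_j `|resid a v i j|.
Proof.
congr (_ * _); apply: eq_bigr => i _; apply: eq_bigr => j _.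
by rewrite !mxE !big_ord1 !mxE.
Qed.

Lemma gram_opp a : (- a) *m (- a)^T = a *m a^T.
Proof. by rewrite raddfN /= mulNmx mulmxN opprK. Qed.

Lemma fobjN a : fobj (- a) = fobj a.
Proof. by apply/funext => v; rewrite /fobj gram_opp. Qed.

Lemma spurious_stationaryN a u :
  spurious_stationary a u -> spurious_stationary (- a) u.
Proof.
case=> stat [ua uNa]; split; last by rewrite opprK.
by rewrite /stationary /subdiff gram_opp.
Qed.

Lemma stationary_certificate_of a u : stationary a u ->
  exists Z, stationary_certificate (fun i => u i 0) (fun i => a i 0) Z.
Proof.
case=> Z [Zsym Zsg] Zu; exists (fun i j => Z i j); split.
- by move=> i j; rewrite -[in LHS]Zsym mxE.
- by move=> i j; have := Zsg i j; rewrite !mxE !big_ord1 !mxE.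
- by move=> i; have := congr1 (fun B : 'cV[R]_n => B i 0) Zu; rewrite !mxE.
Qed.

Lemma spurious_dominated a u : spurious_stationary a u ->
  \sum_i Num.sg (a i 0) * u i 0 = 0 /\ forall i, `|u i 0| <= `|a i 0|.
Proof.
case=> /stationary_certificate_of [Z cert] [ua uNa].
apply: certificate_spurious cert _ _ => [eq_ua|eq_uNa].
  by apply: ua; apply/matrixP => i j; rewrite ord1 eq_ua.
by apply: uNa; apply/matrixP => i j; rewrite ord1 eq_uNa mxE.
Qed.

Lemma resid_add_scale a u h t i j : resid a (u + t *: h) i j =
  resid a u i j + t * cross u h i j + t ^+ 2 * (h i 0 * h j 0).
Proof. by rewrite /resid /cross !mxE; ring. Qed.

Lemma fobj_expansion a u h t :
  fobj a (u + t *: h) - fobj a u - t * dfobj a u h =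
  2^-1 * \sum_i \sum_j (`|resid a u i j + t * cross u h i j + t ^+ 2 * (h i 0 * h j 0)|
                        - `|resid a u i j| - t * dnorm (resid a u i j) (cross u h i j)).
Proof.
rewrite !fobjE /dfobj (mulrCA t) -!mulrBr; congr (_ * _).
rewrite mulr_sumr -!sumrB; apply: eq_bigr => i _.
rewrite mulr_sumr -!sumrB; apply: eq_bigr => j _.
by rewrite resid_add_scale.
Qed.

Lemma fobj_expansion_ge a u h t : 0 < t ->
  - (t ^+ 2 / 2 * l1 h ^+ 2) <= fobj a (u + t *: h) - fobj a u - t * dfobj a u h.
Proof.
move=> t_gt0; rewrite fobj_expansion l1_col_sqr mulrAC mulr_sumr -mulNr.
rewrite mulrC ler_wpM2l ?invr_ge0 ?ler0n // -sumrN.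
apply: ler_sum => i _; rewrite mulr_sumr -sumrN; apply: ler_sum => j _.
exact: dnorm_expansion_ge.
Qed.

Lemma fobj_expansion_near a u h : \forall t \near 0^'+,
  `|fobj a (u + t *: h) - fobj a u - t * dfobj a u h| <= t ^+ 2 / 2 * l1 h ^+ 2.
Proof.
have : \forall t \near 0^'+, forall ij : 'I_n * 'I_n,
    `| `|resid a u ij.1 ij.2 + t * cross u h ij.1 ij.2 + t ^+ 2 * (h ij.1 0 * h ij.2 0)|
       - `|resid a u ij.1 ij.2| - t * dnorm (resid a u ij.1 ij.2) (cross u h ij.1 ij.2)|
    <= t ^+ 2 * `|h ij.1 0 * h ij.2 0|.
  by apply: filter_forall => ij; exact: dnorm_expansion_near.
apply: filterS => t near_t; rewrite fobj_expansion l1_col_sqr normrM.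
have -> : t ^+ 2 / 2 * \sum_i \sum_j `|h i 0 * h j 0| =
    2^-1 * \sum_i \sum_j t ^+ 2 * `|h i 0 * h j 0|.
  by under [in RHS]eq_bigr do rewrite -mulr_sumr; rewrite -mulr_sumr; ring.
rewrite gtr0_norm ?invr_gt0 ?ltr0n // ler_wpM2l ?invr_ge0 ?ler0n //.
apply: le_trans (ler_norm_sum _ _ _) _; apply: ler_sum => i _.
apply: le_trans (ler_norm_sum _ _ _) _; apply: ler_sum => j _.
exact: (near_t (i, j)).
Qed.

Lemma dirder_fobj a u h : dirder (fobj a) u h = dfobj a u h.
Proof.
apply: cvg_lim; first exact: Rhausdorff.
apply: (@cvg_at_right0_linear_bound _ _ _ (l1 h ^+ 2 / 2)).
near=> t; have t_gt0 : 0 < t by near: t; exact: nbhs_right_gt.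
have -> : (fobj a (u + t *: h) - fobj a u) / t - dfobj a u h =
    (fobj a (u + t *: h) - fobj a u - t * dfobj a u h) / t by field; rewrite gt_eqF.
rewrite normrM (gtr0_norm (_ : 0 < t^-1)) ?invr_gt0 // ler_pdivrMr //.
rewrite (_ : _ * t = t ^+ 2 / 2 * l1 h ^+ 2); last by ring.
by near: t; exact: fobj_expansion_near.
Unshelve. all: by end_near.
Qed.

Lemma dfobj_ge0 a u h : stationary a u -> 0 <= dfobj a u h.
Proof.
move=> /stationary_certificate_of [Z cert]; have [_ Zsg _] := cert.
rewrite /dfobj mulr_ge0 ?invr_ge0 ?ler0n //.
apply: le_trans (_ : \sum_i \sum_j Z i j * (h i 0 * u j 0 + u i 0 * h j 0) <= _).
  by rewrite (certificate_bilinear cert (fun i => h i 0)).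
apply: ler_sum => i _; apply: ler_sum => j _.
by rewrite /cross addrC; apply: in_sign_mul_le_dnorm.
Qed.

End Objective.

Section Segment.
Variables (R : realType) (n : nat) (a u : 'cV[R]_n).

Lemma fobj_dominated (v : 'cV[R]_n) : (forall i, `|v i 0| <= `|a i 0|) ->
  fobj a v = 2^-1 * (l1 a ^+ 2 - (\sum_i Num.sg (a i 0) * v i 0) ^+ 2).
Proof.
move=> v_dom; rewrite fobjE /resid; congr (_ * _).
rewrite l1_col !expr2 !big_distrlr -sumrB; apply: eq_bigr => i _.
rewrite -sumrB; apply: eq_bigr => j _ /=.
rewrite distrC norm_sub_dominated; last by rewrite !normrM ler_pM.
by rewrite normrM sgrM; ring.
Qed.

Hypotheses (u_orth : \sum_i Num.sg (a i 0) * u i 0 = 0)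
           (u_dom : forall i, `|u i 0| <= `|a i 0|).

Lemma fobj_segment t : 0 <= t <= 1 ->
  fobj a (u + t *: (a - u)) = 2^-1 * (1 - t ^+ 2) * l1 a ^+ 2.
Proof.
move=> /andP[t_ge0 t_le1].
have entry i : (u + t *: (a - u)) i 0 = (1 - t) * u i 0 + t * a i 0.
  by rewrite !mxE; ring.
rewrite fobj_dominated => [|i]; last first.
  rewrite entry; apply: le_trans (ler_normD _ _) _.
  have t_le1' : 0 <= 1 - t by rewrite subr_ge0.
  rewrite !normrM (ger0_norm t_le1') (ger0_norm t_ge0).
  have := ler_wpM2l t_le1' (u_dom i); lra.
have -> : \sum_i Num.sg (a i 0) * (u + t *: (a - u)) i 0 = t * l1 a.
  transitivity ((1 - t) * \sum_i Num.sg (a i 0) * u i 0 + t * \sum_i `|a i 0|).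
    rewrite !mulr_sumr -big_split; apply: eq_bigr => i _ /=.
    by rewrite entry [`|a i 0|]normrEsg; ring.
  by rewrite u_orth mulr0 add0r l1_col.
ring.
Qed.

Lemma fobj_segment0 : fobj a u = 2^-1 * l1 a ^+ 2.
Proof.
have := fobj_segment (_ : 0 <= 0 <= 1); rewrite lexx ler01 scale0r addr0 => ->//.
by rewrite expr0n subr0 mulr1.
Qed.

Lemma l1_sub_dominated : l1 (a - u) = l1 a.
Proof.
rewrite !l1_col; transitivity (\sum_i (`|a i 0| - Num.sg (a i 0) * u i 0)).
  by apply: eq_bigr => i _; rewrite !mxE norm_sub_dominated.
by rewrite sumrB u_orth subr0.
Qed.

Lemma dirder_segment : dirder (fobj a) u (a - u) = 0.
Proof.
apply: cvg_lim; first exact: Rhausdorff.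
apply: (@cvg_at_right0_linear_bound _ _ _ (l1 a ^+ 2)).
near=> t; have t_gt0 : 0 < t by near: t; exact: nbhs_right_gt.
have t_le1 : t <= 1 by near: t; exact: nbhs_right_le.
rewrite fobj_segment ?(ltW t_gt0) ?t_le1 // fobj_segment0 subr0.
have -> : (2^-1 * (1 - t ^+ 2) * l1 a ^+ 2 - 2^-1 * l1 a ^+ 2) / t =
    - (t * l1 a ^+ 2 / 2) by field; rewrite gt_eqF.
have := mulr_ge0 (ltW t_gt0) (sqr_ge0 (l1 a)).
by move=> tL_ge0; rewrite normrN ger0_norm; lra.
Unshelve. all: by end_near.
Qed.

Lemma segment_quotient t : 0 < t <= 1 ->
  (fobj a (u + t *: (a - u)) - fobj a u - t * dirder (fobj a) u (a - u)) / (t ^+ 2 / 2)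
  = - l1 a ^+ 2.
Proof.
move=> /andP[t_gt0 t_le1].
rewrite fobj_segment ?(ltW t_gt0) ?t_le1 // fobj_segment0 dirder_segment mulr0 subr0.
by field; rewrite gt_eqF.
Qed.

End Segment.

Section SecondOrder.
Variables (R : realType) (n : nat).
Implicit Types (a u w h z : 'cV[R]_n).

Lemma near_prod_right0_gt0 (U : topologicalType) (z : U) :
  \forall p \near filter_prod (0^'+ : set_system R) (nbhs z), 0 < p.1.
Proof.
exists ([set t | 0 < t], setT) => /=; last by move=> [t z'] [].
by split; [exact: nbhs_right_gt | exact: filterT].
Qed.

Lemma fobj_quotient_ge a u h t : 0 < t ->
  - l1 h ^+ 2 <= (fobj a (u + t *: h) - fobj a u - t * dirder (fobj a) u h) / (t ^+ 2 / 2).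
Proof.
move=> t_gt0; have t2_gt0 : 0 < t ^+ 2 / 2 by rewrite divr_gt0 ?exprn_gt0.
rewrite ler_pdivlMr // dirder_fobj; apply: le_trans (fobj_expansion_ge _ _ _ t_gt0).
by rewrite mulNr mulrC.
Qed.

Lemma d2sub_fobj_ge a u w : ((- l1 w ^+ 2)%:E <= d2sub (fobj a) u w)%E.
Proof.
apply: (@limf_einf_ge_cvg _ _ _ _ _ _ (fun p => - l1 p.2 ^+ 2)).
  by apply: filterS (near_prod_right0_gt0 w) => p; exact: fobj_quotient_ge.
by apply: cvg_l1_sqr; exact: cvg_snd.
Qed.

Lemma d2par_fobj_ge a u w z : stationary a u -> dirder (fobj a) u w = 0 ->
  ((- l1 w ^+ 2)%:E <= d2par (fobj a) u w z)%E.
Proof.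
move=> stat dw.
apply: (@limf_einf_ge_cvg _ _ _ _ _ _ (fun p : R * 'cV[R]_n => - l1 (w + (p.1 / 2) *: p.2) ^+ 2)).
  apply: filterS (near_prod_right0_gt0 z) => -[t z'] /= t_gt0.
  have -> : u + t *: w + (2^-1 * t ^+ 2) *: z' = u + t *: (w + (t / 2) *: z').
    by apply/matrixP => i j; rewrite !mxE; ring.
  apply: le_trans (fobj_quotient_ge a u _ t_gt0) _.
  rewrite dw mulr0 subr0 ler_wpM2r ?invr_ge0 ?divr_ge0 ?sqr_ge0 ?ler0n // dirder_fobj.
  by rewrite gerBl mulr_ge0 ?(ltW t_gt0) ?dfobj_ge0.
apply: cvg_l1_sqr.
rewrite -[X in _ --> X](_ : w + (0 / 2) *: z = w); last by rewrite mul0r scale0r addr0.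
apply: cvgD; first exact: cvg_cst.
apply: cvgZ; last exact: cvg_snd.
apply: cvgM; last exact: cvg_cst.
apply: cvg_trans; first exact: cvg_fst.
exact: cvg_at_right_filter.
Qed.

Section AtSpurious.
Variables (a u : 'cV[R]_n).
Hypotheses (u_orth : \sum_i Num.sg (a i 0) * u i 0 = 0)
           (u_dom : forall i, `|u i 0| <= `|a i 0|).

Lemma near_segment_quotient : \forall t \near 0^'+,
  (fobj a (u + t *: (a - u)) - fobj a u - t * dirder (fobj a) u (a - u)) / (t ^+ 2 / 2)
  = - l1 a ^+ 2.
Proof.
near=> t; apply: segment_quotient => //; apply/andP; split.
  by near: t; exact: nbhs_right_gt.
by near: t; exact: nbhs_right_le.
Unshelve. all: by end_near.
Qed.

Lemma d2sub_fobj_spurious : d2sub (fobj a) u (a - u) = (- l1 a ^+ 2)%:E.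
Proof.
apply/eqP; rewrite eq_le -{2}(l1_sub_dominated u_orth u_dom) d2sub_fobj_ge andbT.
apply: limf_einf_prod_le; apply: filterS near_segment_quotient => t /= ->.
exact: lexx.
Qed.

Lemma d2par_fobj_spurious z : stationary a u ->
  ((- l1 a ^+ 2)%:E <= d2par (fobj a) u (a - u) z)%E.
Proof.
move=> stat; rewrite -(l1_sub_dominated u_orth u_dom).
exact: d2par_fobj_ge stat (dirder_segment u_orth u_dom).
Qed.

Lemma d2par_fobj_spurious0 : (d2par (fobj a) u (a - u) 0 <= (- l1 a ^+ 2)%:E)%E.
Proof.
apply: limf_einf_prod_le; apply: filterS near_segment_quotient => t /=.
by rewrite scaler0 addr0 => ->.
Qed.

Lemma sd2quot_fobj_spurious :
  sd2quot (fobj a) u (a - u) t @[t --> 0^'+] --> - l1 a ^+ 2.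
Proof. exact: cvg_near_cst near_segment_quotient. Qed.

End AtSpurious.
End SecondOrder.

Unset Implicit Arguments.

Theorem corollary1 (R : realType) (n : nat) (us u w : 'cV[R]_n) :
  us != 0 ->
  spurious_stationary us u ->
  (w = us - u \/ w = - us - u) ->
  (* (i) *)
  (d2sub (fobj us) u w = (- l1 us ^+ 2)%:E /\ - l1 us ^+ 2 < 0) /\
  (* (ii) *)
  (ereal_inf [set d2par (fobj us) u w z | z in [set: 'cV[R]_n]] = (- l1 us ^+ 2)%:E /\
   (forall eps : R, 0 < eps ->
      exists z : 'cV[R]_n, (d2par (fobj us) u w z < (- l1 us ^+ 2 + eps)%:E)%E)) /\
  (* (iii) *)
  (sd2quot (fobj us) u w t @[t --> 0^'+] --> - l1 us ^+ 2).
Proof.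
move=> us0 spur hw.
(* [fobj us] and stationarity only depend on [us us^T]. *)
wlog -> : us us0 spur {hw} / w = us - u.
  move=> main; case: hw => [|w_def]; first exact: main.
  rewrite -fobjN -l1N; apply: main => //; first by rewrite oppr_eq0.
  exact: spurious_stationaryN.
have [u_orth u_dom] := spurious_dominated spur.
have l1_gt0 : 0 < l1 us by rewrite lt_def l1_ge0 andbT; apply: contra us0 => /eqP/l1_eq0 ->.
have d2par0 := d2par_fobj_spurious0 u_orth u_dom.
split; [split|split; [split|]].
- exact: d2sub_fobj_spurious.
- by rewrite oppr_lt0 exprn_gt0.
- apply/eqP; rewrite eq_le; apply/andP; split.
    by apply: ge_ereal_inf; exists (d2par (fobj us) u (us - u) 0) => //; exists 0.
  apply: le_ereal_inf_tmp => _ [z _ <-].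
  exact: d2par_fobj_spurious u_orth u_dom z spur.1.
- by move=> eps eps_gt0; exists 0; apply: le_lt_trans d2par0 _; rewrite lte_fin ltrDl.
- exact: sd2quot_fobj_spurious.
Qed.
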